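(* (i) For every even integer $q\ge 2$ there exists a $q$-solvable directed graph with $3q/2$ vertices and clique number $q/2$. (ii) For every positive integer $q$ divisible by $3$ there exists a $q$-solvable directed graph on $4q$ vertices with clique number $q/3$. (iii) For every positive integer $q$ divisible by $4$ there exists a $q$-solvable directed graph on $10q$ vertices with clique number $q/4$.
   Context: A directed graph $D=(V,E)$ has arcs $E \subseteq \{(u,v)\in V^2 : u \neq v\}$ (bidirectional pairs allowed). $N^-(v)=\{u:(u,v)\in E\}$. For $q\ge2$ let $[q]=\{0,\dots,q-1\}$. A $D$-function over $[q]$ is a map $f=(f_v)_{v\in V}:[q]^V\to[q]^V$ with each $f_v(x)$ depending only on $(x_u)_{u\in N^-(v)}$. $D$ is $q$-solvable if some $D$-function $f$ over $[q]$ has the property that for every $x\in[q]^V$ there is $v$ with $f_v(x)=x_v$. A clique in a directed graph is a set $S$ of vertices such that $(u,v)$ is an arc for every ordered pair of distinct $u,v\in S$ (i.e. all pairs are joined in both directions); the clique number is the maximum size of a clique. *)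

From mathcomp Require Import all_boot.
Set Implicit Arguments. Unset Strict Implicit. Unset Printing Implicit Defensive.

(* A directed graph on the vertex set 'I_n is given by an arc relation
   E : rel 'I_n; loops are forbidden (irreflexivity).  Bidirectional pairs
   are allowed. *)
Definition loopless (n : nat) (E : rel 'I_n) : Prop := forall v, ~~ E v v.

Definition in_nbhd (n : nat) (E : rel 'I_n) (v : 'I_n) : {set 'I_n} :=
  [set u | E u v].

Definition is_Dfunction (n q : nat) (E : rel 'I_n)
  (f : 'I_n -> {ffun 'I_n -> 'I_q} -> 'I_q) : Prop :=
  forall (v : 'I_n) (x y : {ffun 'I_n -> 'I_q}),
    (forall u, u \in in_nbhd E v -> x u = y u) -> f v x = f v y.

Definition q_solvable (n q : nat) (E : rel 'I_n) : Prop :=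
  exists f : 'I_n -> {ffun 'I_n -> 'I_q} -> 'I_q,
    is_Dfunction E f /\ forall x : {ffun 'I_n -> 'I_q}, exists v, f v x = x v.

Definition is_clique (n : nat) (E : rel 'I_n) (S : {set 'I_n}) : Prop :=
  forall u v, u \in S -> v \in S -> u != v -> E u v.

Definition clique_number_eq (n : nat) (E : rel 'I_n) (k : nat) : Prop :=
  (exists S : {set 'I_n}, is_clique E S /\ #|S| = k) /\
  (forall S : {set 'I_n}, is_clique E S -> #|S| <= k).

From mathcomp Require Import all_boot zify.
Set Implicit Arguments. Unset Strict Implicit. Unset Printing Implicit Defensive.

(* Each graph is the blow-up of a small oriented graph H:
   every vertex of H becomes a block, a clique of size k, an arc a -> b of H
   becomes all arcs from block a to block b, and surplus vertices are
   isolated.  Cliques then have at most one vertex per offset (two blocks are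
   never joined both ways), so the clique number is k.  If H is m-solvable
   via g, the blow-up is (m k)-solvable: a vertex at offset t of block a
   guesses that its block sum is g_a(y) + m t modulo m k, where y lists the
   block sums modulo m; at the block where g is right, the offset determined
   by the block sum guesses right. *)

Definition oriented (h : nat) (H : rel 'I_h) : Prop := forall a b, H a b -> ~~ H b a.

Lemma oriented_loopless (h : nat) (H : rel 'I_h) : oriented H -> loopless H.
Proof. by move=> H_or a; apply/negP => Haa; move: (H_or a a Haa); rewrite Haa. Qed.

(* Solvability is inherited by smaller alphabets: embed [m] into [m'] and
   project the guesses back. *)
Lemma q_solvable_le (h m m' : nat) (H : rel 'I_h) :
  0 < m -> m <= m' -> q_solvable m' H -> q_solvable m H.
Proof.
move=> m_gt0 le_mm' [g [g_local g_solves]].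
pose widen (y : {ffun 'I_h -> 'I_m}) : {ffun 'I_h -> 'I_m'} :=
  [ffun b => widen_ord le_mm' (y b)].
exists (fun a y => insubd (Ordinal m_gt0) (val (g a (widen y)))); split.
- move=> a y y' yy'; congr (insubd _ (val _)); apply: g_local => u u_in.
  by rewrite !ffunE yy'.
- move=> y; have [a ga] := g_solves (widen y); exists a.
  by apply: val_inj; rewrite ga ffunE val_insubd /= ltn_ord.
Qed.

Lemma mod_mul_split (m k s : nat) :
  s %% m + m * (s %% (m * k) %/ m) = s %% (m * k).
Proof. by rewrite addnC mulnC {2}(divn_eq (s %% (m * k)) m) modn_dvdm ?dvdn_mulr. Qed.

Lemma mod_add_neg (q a r : nat) : 0 < q -> (a + r + q.-1 * r) %% q = a %% q.
Proof. by move=> q_gt0; rewrite -addnA -mulSn prednK // mulnC addnC modnMDl. Qed.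

(* The blow-up of H : rel 'I_h.+1 with blocks of size k on 'I_n: vertex
   v < (h+1)k lies in block v / k at offset v mod k; other vertices are
   isolated. *)
Section BlowUp.
Variables (h k n : nat) (H : rel 'I_h.+1).
Hypothesis k_gt0 : 0 < k.

Definition in_blocks (v : 'I_n) : bool := v < h.+1 * k.

Definition block (v : 'I_n) : 'I_h.+1 := inord (v %/ k).

Definition blowup : rel 'I_n := fun u v =>
  [&& in_blocks u, in_blocks v, u != v & (block u == block v) || H (block u) (block v)].

Lemma block_val v : in_blocks v -> block v = v %/ k :> nat.
Proof. by move=> v_in; rewrite inordK // ltn_divLR. Qed.

Lemma blowup_loopless : loopless blowup.
Proof. by move=> v; rewrite /blowup eqxx !andbF. Qed.

Hypothesis hk_le_n : h.+1 * k <= n.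

Fact block_vertex_subproof (a : 'I_h.+1) (t : 'I_k) : a * k + t < n.
Proof. by apply: leq_trans hk_le_n; have := ltn_ord a; have := ltn_ord t; nia. Qed.

Definition block_vertex (a : 'I_h.+1) (t : 'I_k) : 'I_n :=
  Ordinal (block_vertex_subproof a t).

Lemma block_vertex_in a t : in_blocks (block_vertex a t).
Proof. by rewrite /in_blocks /=; have := ltn_ord a; have := ltn_ord t; nia. Qed.

Lemma block_vertexK a t : block (block_vertex a t) = a.
Proof.
apply: val_inj => /=.
by rewrite block_val ?block_vertex_in //= divnMDl // divn_small ?addn0.
Qed.

Lemma block_vertex_mod a t : block_vertex a t %% k = t.
Proof. by rewrite /= modnMDl modn_small. Qed.

Lemma blowup_has_clique : exists S, is_clique blowup S /\ #|S| = k.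
Proof.
exists [set block_vertex ord0 t | t : 'I_k]; split.
- move=> _ _ /imsetP[t _ ->] /imsetP[t' _ ->] tt'.
  by rewrite /blowup !block_vertex_in tt' !block_vertexK eqxx.
- rewrite card_imset ?card_ord // => t t' tt'; apply: val_inj.
  by rewrite /= -(block_vertex_mod ord0 t) tt' block_vertex_mod.
Qed.

Hypothesis H_oriented : oriented H.

(* Distinct vertices of a clique have distinct offsets: equal offsets force
   different blocks, which would need opposite arcs of H. *)
Lemma blowup_clique_bound S : is_clique blowup S -> #|S| <= k.
Proof.
move=> S_clique; pose offset (v : 'I_n) : 'I_k := Ordinal (ltn_pmod v k_gt0).
rewrite -(card_in_imset (f := offset)).
  by apply: leq_trans (max_card _) _; rewrite card_ord.
move=> u v uS vS /(congr1 val) /= uv_mod; apply/eqP; apply: contraT => uv.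
have /and4P[u_in v_in _ Huv] := S_clique u v uS vS uv.
have vu : v != u by rewrite eq_sym.
have /and4P[_ _ _ Hvu] := S_clique v u vS uS vu.
case: (eqVneq (block u) (block v)) => [uv_block | uv_block] /= in Huv Hvu.
- move: uv; rewrite -val_eqE /= (divn_eq u k) (divn_eq v k) uv_mod.
  by rewrite -!block_val // uv_block eqxx.
- by move: (H_oriented Huv); rewrite Hvu.
Qed.

Lemma blowup_clique_number : clique_number_eq blowup k.
Proof. by split; [exact: blowup_has_clique | exact: blowup_clique_bound]. Qed.

Section Solvable.
Variables (m : nat) (g : 'I_h.+1 -> {ffun 'I_h.+1 -> 'I_m} -> 'I_m).
Hypotheses (m_gt0 : 0 < m) (g_local : is_Dfunction H g).
Hypothesis g_solves : forall y, exists a, g a y = y a.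

Local Notation q := (m * k).

Fact q_gt0 : 0 < q.
Proof. by rewrite muln_gt0 m_gt0. Qed.

Definition block_sum (x : {ffun 'I_n -> 'I_q}) (a : 'I_h.+1) : nat :=
  \sum_(u | in_blocks u && (block u == a)) x u.

Definition rest_sum (x : {ffun 'I_n -> 'I_q}) (v : 'I_n) : nat :=
  \sum_(u | in_blocks u && (block u == block v) && (u != v)) x u.

Definition block_label (x : {ffun 'I_n -> 'I_q}) : {ffun 'I_h.+1 -> 'I_m} :=
  [ffun a => Ordinal (ltn_pmod (block_sum x a) m_gt0)].

(* Vertex v at offset t of block a guesses the value making the sum of its
   block congruent to g_a(y) + m t modulo m k; the term (q-1) r stands
   for -r modulo q. *)
Definition blowup_fun (v : 'I_n) (x : {ffun 'I_n -> 'I_q}) : 'I_q :=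
  Ordinal (ltn_pmod (if in_blocks v then
      g (block v) (block_label x) + m * (v %% k) + q.-1 * rest_sum x v
    else 0) q_gt0).

(* The guess of v only reads its block and the blocks of its H-predecessors,
   all of which lie in its in-neighbourhood. *)
Lemma blowup_fun_local : is_Dfunction blowup blowup_fun.
Proof.
move=> v x x' xx'; apply: val_inj => /=; case: ifP => // v_in.
have label_local : g (block v) (block_label x) = g (block v) (block_label x').
  apply: g_local => b; rewrite inE => Hbv; rewrite !ffunE; apply: val_inj => /=.
  congr (_ %% _); apply: eq_bigr => u /andP[u_in /eqP ub]; congr val.
  apply: xx'; rewrite inE /blowup u_in v_in ub Hbv orbT andbT /=.
  apply: contraTneq Hbv => uv; rewrite -ub uv; exact: oriented_loopless.
rewrite label_local; suff -> : rest_sum x v = rest_sum x' v by [].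
apply: eq_bigr => u /andP[/andP[u_in uv_block] uv]; congr val; apply: xx'.
by rewrite inE /blowup u_in v_in uv uv_block.
Qed.

(* If g guesses right at block a, the vertex of block a at offset
   (s mod mk) / m, where s is the block sum, guesses right. *)
Lemma blowup_fun_fixpoint x : exists v, blowup_fun v x = x v.
Proof.
have [a g_fix] := g_solves (block_label x).
set s := block_sum x a.
have t_lt : s %% q %/ m < k by rewrite ltn_divLR // [k * m]mulnC ltn_pmod ?q_gt0.
pose v := block_vertex a (Ordinal t_lt).
have sE : s = x v + rest_sum x v.
  rewrite /s /block_sum (bigD1 v) /= ?block_vertex_in ?block_vertexK ?eqxx //.
  by rewrite /rest_sum block_vertexK.
exists v; apply: val_inj; rewrite /= block_vertex_in block_vertexK g_fix ffunE /=.
rewrite modnMDl (modn_small t_lt) -/s mod_mul_split modnDml sE mod_add_neg ?q_gt0 //.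
exact: modn_small.
Qed.

Lemma blowup_solvable : q_solvable q blowup.
Proof.
by exists blowup_fun; split; [exact: blowup_fun_local | exact: blowup_fun_fixpoint].
Qed.

End Solvable.

End BlowUp.

Lemma blowup_witness (h m k n q : nat) (H : rel 'I_h.+1) :
  0 < m -> 0 < k -> q = m * k -> h.+1 * k <= n -> oriented H -> q_solvable m H ->
  exists E : rel 'I_n, loopless E /\ q_solvable q E /\ clique_number_eq E k.
Proof.
move=> m_gt0 k_gt0 -> hk_le_n H_or [g [g_local g_solves]].
exists (@blowup h k n H); split; [exact: blowup_loopless | split].
- exact: blowup_solvable g_solves.
- exact: blowup_clique_number.
Qed.

Notation prev3 := (@ord_pred 3).

Lemma prev3_inord i : i < 3 -> prev3 (inord i) = inord ((i + 2) %% 3).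
Proof. by move=> ilt; apply: val_inj; rewrite /= !inordK //; lia. Qed.

Lemma prev3_neq (b : 'I_3) : prev3 b != b.
Proof. by rewrite -val_eqE /=; have := ltn_ord b; lia. Qed.

Lemma prev3_prev3_neq (b : 'I_3) : prev3 (prev3 b) != b.
Proof. by rewrite -val_eqE /=; have := ltn_ord b; lia. Qed.

Lemma prev3_adjacent (b b' : 'I_3) : b != b' -> (b' == prev3 b) || (b == prev3 b').
Proof.
by rewrite -!val_eqE /=; have := ltn_ord b; have := ltn_ord b'; lia.
Qed.

Lemma forall_ord3 (P : pred 'I_3) :
  [forall j, P j] = [&& P (inord 0), P (inord 1) & P (inord 2)].
Proof.
apply/forallP/and3P => [Pj|[P0 P1 P2] [[|[|[|//]]] jlt]]; first by split; apply: Pj.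
- by rewrite (_ : Ordinal jlt = inord 0) //; apply: val_inj; rewrite /= inordK.
- by rewrite (_ : Ordinal jlt = inord 1) //; apply: val_inj; rewrite /= inordK.
- by rewrite (_ : Ordinal jlt = inord 2) //; apply: val_inj; rewrite /= inordK.
Qed.

Lemma cycle3_not_2colourable (T : finType) (c : 'I_3 -> T) :
  #|T| < 3 -> exists b, c (prev3 b) = c b.
Proof.
move=> T_small; case: (pickP (fun b => c (prev3 b) == c b)) => [b /eqP | no_fix].
  by exists b.
have c_inj : injective c.
  move=> b b' cbb'; apply/eqP; apply: contraT => /prev3_adjacent /orP[] /eqP bE.
  - by move: (no_fix b); rewrite -bE cbb' eqxx.
  - by move: (no_fix b'); rewrite -bE cbb' eqxx.
by have := leq_card c c_inj; rewrite card_ord leqNgt T_small.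
Qed.

Definition cycle3 : rel 'I_3 := fun a b => a == prev3 b.

Lemma cycle3_oriented : oriented cycle3.
Proof.
move=> a b /eqP ->; apply/negP => /eqP bE.
by move: (prev3_prev3_neq b); rewrite -bE eqxx.
Qed.

Lemma cycle3_solvable : q_solvable 2 cycle3.
Proof.
exists (fun b y => y (prev3 b)); split.
- by move=> b y y' yy'; apply: yy'; rewrite inE /cycle3.
- by move=> y; apply: cycle3_not_2colourable; rewrite card_ord.
Qed.

(* Key fact for C3[C3] over [4]: if no vertex of a 3-cycle carries its
   predecessor's value shifted by 2c, the values form a proper colouring of
   the cycle exactly when c is false (for c true, the three nonzero steps
   around the cycle would all be odd, yet sum to 0 mod 4). *)
Lemma shifted_row_colouring (a : 'I_3 -> 'I_4) (c : bool) :
  (forall j, a j != (a (prev3 j) + 2 * c) %% 4 :> nat) ->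
  [forall j, a (prev3 j) != a j] = ~~ c.
Proof.
move=> no_fix; have := no_fix (inord 0); have := no_fix (inord 1).
have := no_fix (inord 2); rewrite forall_ord3 !prev3_inord //= -!val_eqE /=.
have := ltn_ord (a (inord 0)); have := ltn_ord (a (inord 1)).
have := ltn_ord (a (inord 2)).
move: (val (a (inord 0))) (val (a (inord 1))) (val (a (inord 2))) => a0 a1 a2.
clear no_fix; case: c; case: (eqVneq a2 a0); case: (eqVneq a0 a1);
  by case: (eqVneq a1 a2); rewrite /=; lia.
Qed.

Definition row (v : 'I_9) : 'I_3 := inord (v %/ 3).
Definition col (v : 'I_9) : 'I_3 := inord (v %% 3).

Fact cell_subproof (i j : 'I_3) : 3 * i + j < 9.
Proof. by have := ltn_ord i; have := ltn_ord j; lia. Qed.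

Definition cell (i j : 'I_3) : 'I_9 := Ordinal (cell_subproof i j).

Lemma row_cell i j : row (cell i j) = i.
Proof.
by apply: val_inj; rewrite /row /= inordK; have := ltn_ord i; have := ltn_ord j; lia.
Qed.

Lemma col_cell i j : col (cell i j) = j.
Proof.
by apply: val_inj; rewrite /col /= inordK; have := ltn_ord i; have := ltn_ord j; lia.
Qed.

Definition cycle3_lex : rel 'I_9 := fun u v =>
  (row u == row v) && cycle3 (col u) (col v) || cycle3 (row u) (row v).

Lemma cycle3_lex_oriented : oriented cycle3_lex.
Proof.
move=> u v /orP[/andP[/eqP ruv cuv] | ruv]; apply/negP;
  case/orP => [/andP[/eqP rvu cvu] | rvu].
- by move: (cycle3_oriented cuv); rewrite cvu.
- by move: rvu; rewrite /cycle3 ruv eq_sym (negbTE (prev3_neq _)).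
- by move: ruv; rewrite /cycle3 rvu eq_sym (negbTE (prev3_neq _)).
- by move: (cycle3_oriented ruv); rewrite rvu.
Qed.

Definition proper_row (y : {ffun 'I_9 -> 'I_4}) (i : 'I_3) : bool :=
  [forall j, y (cell i (prev3 j)) != y (cell i j)].

Definition cycle3_lex_fun (v : 'I_9) (y : {ffun 'I_9 -> 'I_4}) : 'I_4 :=
  Ordinal (ltn_pmod (y (cell (row v) (prev3 (col v)))
                     + 2 * proper_row y (prev3 (row v))) (isT : 0 < 4)).

(* If no cell guessed right, shifted_row_colouring would make properness
   alternate around the 3-cycle of rows, contradicting
   cycle3_not_2colourable for bool. *)
Lemma cycle3_lex_solvable : q_solvable 4 cycle3_lex.
Proof.
exists cycle3_lex_fun; split.
- move=> v y y' yy'; apply: val_inj; rewrite /= yy' ?inE /cycle3_lex;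
    last by rewrite row_cell col_cell eqxx /cycle3 eqxx.
  congr ((_ + 2 * nat_of_bool _) %% 4); apply: eq_forallb => j.
  by rewrite !yy' // inE /cycle3_lex /cycle3 row_cell eqxx orbT.
- move=> y; case: (pickP (fun v => cycle3_lex_fun v y == y v)) => [v /eqP | no_fix].
    by exists v.
  have alternate i : proper_row y i = ~~ proper_row y (prev3 i).
    apply: shifted_row_colouring => j; move: (no_fix (cell i j)).
    by rewrite /cycle3_lex_fun -val_eqE /= row_cell col_cell eq_sym => ->.
  have [i] : exists i, proper_row y (prev3 i) = proper_row y i.
    by apply: cycle3_not_2colourable; rewrite card_bool.
  by rewrite (alternate i); case: (proper_row y (prev3 i)).
Qed.

Theorem theorem7 :
  (forall q : nat, 2 <= q -> ~~ odd q ->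
     exists E : rel 'I_(3 * q %/ 2),
       loopless E /\ q_solvable q E /\ clique_number_eq E (q %/ 2)) /\
  (forall q : nat, 0 < q -> 3 %| q ->
     exists E : rel 'I_(4 * q),
       loopless E /\ q_solvable q E /\ clique_number_eq E (q %/ 3)) /\
  (forall q : nat, 0 < q -> 4 %| q ->
     exists E : rel 'I_(10 * q),
       loopless E /\ q_solvable q E /\ clique_number_eq E (q %/ 4)).
Proof.
split; [|split].
- move=> q q_ge2 q_even; have qE : q = 2 * (q %/ 2).
    by rewrite mulnC divnK // dvdn2.
  apply: (@blowup_witness 2 2) cycle3_oriented cycle3_solvable; lia.
- move=> q q_gt0 dvd3q; have qE : q = 3 * (q %/ 3) by rewrite mulnC divnK.
  have C3C3_solvable : q_solvable 3 cycle3_lex.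
    exact: q_solvable_le cycle3_lex_solvable.
  apply: (@blowup_witness 8 3) cycle3_lex_oriented C3C3_solvable; lia.
- move=> q q_gt0 dvd4q; have qE : q = 4 * (q %/ 4) by rewrite mulnC divnK.
  apply: (@blowup_witness 8 4) cycle3_lex_oriented cycle3_lex_solvable; lia.
Qed.
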